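(* Let $n, r, d$ be positive integers with $n\geqslant r+1$ and $d\geqslant2$, and let $\delta=(d-2)/(d-1)$. Then $$\frac{1}{r}\binom{d+r}{d+1}\leqslant m\!\left(K_n^d, r\right)\leqslant\frac{(r+2d-1)^d-\delta^2(r-2)^d}{2\,d!}.$$
   Context: All graphs are finite, simple and undirected. For a nonnegative integer $r$ and a graph $G$, the $r$-neighbor bootstrap percolation process on $G$ starts with a set $A_0\subseteq V(G)$ of initially active vertices, and for $i\geqslant 1$, $A_i=A_{i-1}\cup\{v\in V(G) : |N(v)\cap A_{i-1}|\geqslant r\}$, where $N(v)$ is the set of neighbors of $v$. The set $A_0$ is a percolating set if $\bigcup_{i\geqslant 0}A_i=V(G)$. $m(G,r)$ denotes the minimum size of a percolating set of $G$ in the $r$-neighbor bootstrap percolation process. $K_n$ is the complete graph with vertex set $\{0,1,\ldots,n-1\}$, and $K_n^d$ is the Cartesian product of $d$ copies of $K_n$: its vertex set is $\{0,\ldots,n-1\}^d$ and two vertices are adjacent iff they differ in exactly one coordinate. *)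

From mathcomp Require Import all_boot all_order all_algebra.
Set Implicit Arguments. Unset Strict Implicit. Unset Printing Implicit Defensive.

Definition Knd_vertex (n d : nat) := {ffun 'I_d -> 'I_n}.

Definition Knd_adj (n d : nat) (u v : Knd_vertex n d) : bool :=
  #|[set i : 'I_d | u i != v i]| == 1.

Definition bp_step (n d r : nat) (A : {set Knd_vertex n d}) : {set Knd_vertex n d} :=
  A :|: [set v | r <= #|[set u in A | Knd_adj u v]|].

Definition bp_iter (n d r : nat) (A0 : {set Knd_vertex n d}) (i : nat) :=
  iter i (bp_step r) A0.

Definition percolating (n d r : nat) (A0 : {set Knd_vertex n d}) : Prop :=
  forall v : Knd_vertex n d, exists i, v \in bp_iter r A0 i.

From mathcomp Require Import all_boot all_order all_algebra.
From mathcomp Require Import perm zify ring lra.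
Import Order.TTheory GRing.Theory Num.Theory.
Set Implicit Arguments. Unset Strict Implicit. Unset Printing Implicit Defensive.

(* Lower bound, by the polynomial method.  Let W be the space of symmetric
   polynomials in d+1 variables of degree < r in each variable; its dimension
   is C(d+r, d+1).  Label the values of each coordinate by distinct rationals
   and attach to a vertex v the line {(label v, t)}.  If |A| r < dim W, some
   nonzero F in W vanishes on the lines of all vertices of A.  If u is a
   neighbour of v differing in coordinate i, symmetry of F gives
   F(label v, label_i u_i) = F(label u, label_i v_i); hence if v has r
   neighbours with vanishing lines, F restricted to the line of v has degree
   < r and r distinct roots, so it vanishes too.  Percolation spreads this to
   every vertex, F then vanishes on a grid of r^(d+1) points, and F = 0.

   Upper bound.  The vertices of weight w < r with w = r-1 (mod d) percolate:
   by induction on the weight, a vertex outside this seed has all its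
   neighbours of smaller weight infected and, in each coordinate,
   (r-1-w) div d + 1 more neighbours in the seed: at least r in total.  Sending (v, t)
   to the increasing sequence (j + t + v_0 + ... + v_j)_j embeds
   seed x [0, d) into the d-subsets of [0, r+2d-2), so
   d! d |seed| <= (r+2d-2)^d, which implies the stated bound. *)

Section Percolation.
Variables (n d r : nat).
Implicit Types (A S : {set Knd_vertex n d}) (u v : Knd_vertex n d).

Lemma bp_iter_subset A i j : i <= j -> bp_iter r A i \subset bp_iter r A j.
Proof.
move/subnK => <-; elim: (j - i) => [|k IH] //=.
exact: subset_trans IH (subsetUl _ _).
Qed.

Lemma percolating_ind A (P : Knd_vertex n d -> Prop) :
  percolating r A -> {in A, forall a, P a} ->
  (forall S v, {in S, forall u, P u} -> r <= #|[set u in S | Knd_adj u v]| -> P v) ->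
  forall v, P v.
Proof.
move=> percA PA Pstep v; have [i] := percA v.
elim: i v => [|i IH] v /=; first exact: PA.
rewrite in_setU => /orP[/IH//|]; rewrite inE; exact: Pstep.
Qed.

Lemma Knd_adj_coord u v : Knd_adj u v -> exists i, forall l, (u l != v l) = (l == i).
Proof.
move/cards1P=> [i Ei]; exists i => l.
by have := congr1 (fun X : {set 'I_d} => l \in X) Ei; rewrite !inE.
Qed.

End Percolation.

Section FieldFacts.
Local Open Scope ring_scope.

Lemma coefs_eq0_of_roots (R : idomainType) r (c : 'I_r -> R) (s : seq R) :
  uniq s -> (r <= size s)%N -> {in s, forall t, \sum_(j < r) c j * t ^+ j = 0} ->
  forall j, c j = 0.
Proof.
move=> s_uniq r_le_s c_roots j.
pose p : {poly R} := \poly_(i < r) (if insub i is Some k then c k else 0).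
have p_eq0 : p = 0.
  apply: (roots_geq_poly_eq0 (rs := s)) => //; last exact: leq_trans (size_poly _ _) r_le_s.
  apply/allP => t st; rewrite /root horner_poly; apply/eqP.
  by rewrite -[RHS](c_roots t st); apply: eq_bigr => i _; rewrite valK.
by have := congr1 (fun q : {poly R} => q`_j) p_eq0; rewrite coef_poly ltn_ord valK coef0.
Qed.

Variable F : fieldType.

Lemma vandermonde_dual r (mu : 'I_r -> F) : injective mu ->
  forall j j' : 'I_r,
  \sum_(a < r) invmx (Vandermonde r (\row_a mu a)) a j * mu a ^+ j' = (j' == j)%:R.
Proof.
move=> mu_inj j j'.
have V_unit : Vandermonde r (\row_a mu a) \in unitmx.
  rewrite unitmxE unitfE det_Vandermonde; apply/prodf_neq0 => a _.
  apply/prodf_neq0 => b ab; rewrite !mxE subr_eq0.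
  by apply: contraTneq ab => /mu_inj ->; rewrite ltnn.
have := congr1 (fun M : 'M[F]_r => M j' j) (mulmxV V_unit).
by rewrite !mxE => <-; apply: eq_bigr => a _; rewrite !mxE mulrC.
Qed.

Lemma grid_coefs_eq0 k r (mu : 'I_k -> 'I_r -> F) (G : {ffun 'I_k -> 'I_r} -> F) :
  (forall l, injective (mu l)) ->
  (forall g : {ffun 'I_k -> 'I_r}, \sum_J G J * \prod_(l < k) mu l (g l) ^+ J l = 0) ->
  forall J, G J = 0.
Proof.
move=> mu_inj G_grid J.
pose W l := invmx (Vandermonde r (\row_a mu l a)).
have dual l := vandermonde_dual (mu_inj l).
transitivity (\sum_J' G J' * \prod_(l < k) \sum_(a < r) W l a (J l) * mu l a ^+ J' l).
  rewrite (bigD1 J) //= [X in _ + X]big1 => [|J' J'J].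
    by rewrite addr0 big1 ?mulr1 // => l _; rewrite dual eqxx.
  have [l J'Jl] : exists l, J' l != J l.
    by apply/existsP; apply: contraNT J'J => /existsPn J'J; apply/eqP/ffunP => l; apply/eqP/negPn.
  by rewrite (bigD1 l) //= dual (negbTE J'Jl) mul0r mulr0.
under eq_bigr do rewrite bigA_distr_bigA mulr_sumr.
rewrite exchange_big big1 // => g _.
under eq_bigr do rewrite big_split mulrCA.
by rewrite -mulr_sumr G_grid mulr0.
Qed.

Lemma nonzero_left_kernel p q (M : 'M[F]_(p, q)) :
  (q < p)%N -> exists2 x : 'rV_p, x != 0 & x *m M = 0.
Proof.
move=> qp; have : kermx M != 0.
  by rewrite kermx_eq0; apply: contraTN qp => /eqP <-; rewrite -leqNgt rank_leq_col.
by case/rowV0Pn => y; rewrite sub_kermx => /eqP yM y0; exists y.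
Qed.

End FieldFacts.

Section LowerBound.
Local Open Scope ring_scope.
Variables (n d m : nat).
Local Notation r := m.+1.
Local Notation V := (Knd_vertex n d).
Local Notation exponent := {ffun 'I_d.+1 -> 'I_r}.

(* Labels of distinct coordinates differ, so distinct neighbours of a vertex
   give distinct roots. *)
Definition label (l : nat) (a : 'I_n) : rat := (l * n + a)%:R.

Lemma label_inj l l' a a' : label l a = label l' a' -> l = l' /\ a = a'.
Proof.
move/eqP; rewrite eqr_nat => /eqP E.
have n_gt0 : (0 < n)%N := leq_ltn_trans (leq0n a) (ltn_ord a).
have := congr1 (divn^~ n) E; have := congr1 (modn^~ n) E.
rewrite /= !divnMDl // !modnMDl !divn_small // !modn_small // !addn0.
by move/val_inj.
Qed.

Definition line_point (v : V) (t : rat) (l : 'I_d.+1) : rat :=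
  if unlift ord_max l is Some l' then label l' (v l') else t.

Definition multisets := [set s : (d.+1).-tuple 'I_r | sorted leq (map val s)].
Local Notation N := #|multisets|.
Implicit Types (J : exponent) (x : 'rV[rat]_N) (u v : V).

Definition multiset_of (J : exponent) : seq nat :=
  sort leq [seq val (J l) | l <- enum 'I_d.+1].
Definition multiset_at (i : 'I_N) : seq nat := map val (enum_val i : (d.+1).-tuple 'I_r).

(* [x] encodes the symmetric polynomial whose coefficient at the exponent [J]
   is the entry of [x] indexed by the multiset of exponents of [J]. *)
Definition sym_coef (x : 'rV[rat]_N) (J : exponent) : rat :=
  \sum_(i < N) x 0 i * (multiset_of J == multiset_at i)%:R.
Definition sym_eval (x : 'rV[rat]_N) (X : 'I_d.+1 -> rat) : rat :=
  \sum_(J : exponent) sym_coef x J * \prod_l X l ^+ J l.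

Definition basis_line_coef (i : 'I_N) (v : V) (j : 'I_r) : rat :=
  \sum_(J : exponent | J ord_max == j)
     (multiset_of J == multiset_at i)%:R * \prod_(l < d) label l (v l) ^+ J (lift ord_max l).
Definition line_coef (x : 'rV[rat]_N) (v : V) (j : 'I_r) : rat :=
  \sum_(i < N) x 0 i * basis_line_coef i v j.

Lemma sym_eval_line x v t : sym_eval x (line_point v t) = \sum_(j < r) line_coef x v j * t ^+ j.
Proof.
rewrite /sym_eval (partition_big (fun J : exponent => J ord_max) xpredT) //=.
apply: eq_bigr => j _; rewrite /line_coef /basis_line_coef mulr_suml.
under [RHS]eq_bigr do rewrite mulr_sumr mulr_suml.
rewrite [RHS]exchange_big /=; apply: eq_bigr => J /eqP Jj.
rewrite /sym_coef mulr_suml; apply: eq_bigr => i _.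
rewrite (bigD1_ord ord_max) //= /line_point unlift_none Jj.
under eq_bigr do rewrite liftK.
ring.
Qed.

Lemma eq_sym_eval x X Y : X =1 Y -> sym_eval x X = sym_eval x Y.
Proof. by move=> XY; apply: eq_bigr => J _; under eq_bigr do rewrite XY. Qed.

Lemma multiset_of_perm J (s : 'S_d.+1) : multiset_of [ffun l => J (s l)] = multiset_of J.
Proof.
apply/perm_sortP; [exact: leq_total | exact: leq_trans | exact: anti_leq |].
rewrite (eq_map (g := (fun l => val (J l)) \o s)) => [|l]; last by rewrite ffunE.
rewrite map_comp; apply: perm_map; apply: uniq_perm.
- by rewrite map_inj_uniq ?enum_uniq //; exact: perm_inj.
- exact: enum_uniq.
move=> l; rewrite mem_enum; apply/mapP; exists (s^-1 l)%g; first by rewrite mem_enum.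
by rewrite permKV.
Qed.

Lemma sym_eval_perm x X (s : 'S_d.+1) : sym_eval x (X \o s) = sym_eval x X.
Proof.
pose sJ (J : exponent) : exponent := [ffun l => J (s l)].
have sJ_inj : injective sJ.
  by move=> J1 J2 /ffunP E; apply/ffunP => l; have := E ((s^-1)%g l); rewrite !ffunE permKV.
rewrite /sym_eval (reindex_inj sJ_inj); apply: eq_bigr => J _.
rewrite /sym_coef multiset_of_perm; congr (_ * _).
by rewrite [RHS](reindex_inj (@perm_inj _ s)); apply: eq_bigr => l _; rewrite ffunE.
Qed.

Lemma line_point_swap u v i : (forall l, l != i -> u l = v l) ->
  line_point v (label i (u i)) \o tperm (lift ord_max i) ord_max =1 line_point u (label i (v i)).
Proof.
move=> uv l /=; case: (unliftP ord_max l) => [l'|] ->.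
  have [->|l'i] := eqVneq l' i; first by rewrite tpermL /line_point unlift_none liftK.
  rewrite tpermD ?neq_lift 1?(inj_eq lift_inj) 1?eq_sym //.
  by rewrite /line_point liftK uv.
by rewrite tpermR /line_point unlift_none liftK.
Qed.

Lemma sym_eval_line_swap x u v i : (forall l, l != i -> u l = v l) ->
  sym_eval x (line_point v (label i (u i))) = sym_eval x (line_point u (label i (v i))).
Proof.
move=> uv; rewrite -(sym_eval_perm _ _ (tperm (lift ord_max i) ord_max)).
exact: eq_sym_eval (line_point_swap uv).
Qed.

Definition line_eq0 (x : 'rV[rat]_N) (v : V) := forall j, line_coef x v j = 0.

Lemma line_eq0_of_neighbours x (S : {set V}) v : {in S, forall u, line_eq0 x u} ->
  (r <= #|[set u in S | Knd_adj u v]|)%N -> line_eq0 x v.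
Proof.
move=> S_eq0 card_nb; set Nb := [set u in S | Knd_adj u v] in card_nb.
pose nb_root u := \sum_(i < d | u i != v i) label i (u i).
have Nb_coord u : u \in Nb ->
    exists i, [/\ forall l, (u l != v l) = (l == i), nb_root u = label i (u i) & u \in S].
  rewrite inE => /andP[uS /Knd_adj_coord[i ui]]; exists i; split => //.
  by rewrite /nb_root (eq_bigl (pred1 i)) ?big_pred1_eq // => l; rewrite /= ui.
apply: (coefs_eq0_of_roots (s := [seq nb_root u | u <- enum Nb])).

- rewrite map_inj_in_uniq ?enum_uniq // => u1 u2; rewrite !mem_enum.
  move=> /Nb_coord[i1 [u1i1 -> _]] /Nb_coord[i2 [u2i2 -> _]] /label_inj[/val_inj Ei Eu].
  apply/ffunP => l; have [->|li] := eqVneq l i1; first by rewrite Eu Ei.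
  have u1l := u1i1 l; have u2l := u2i2 l; rewrite -Ei (negbTE li) in u1l u2l.
  by rewrite (eqP (negbFE u1l)) (eqP (negbFE u2l)).
- by rewrite size_map -cardE.
move=> t /mapP[u + ->]; rewrite mem_enum => /Nb_coord[i [ui -> uS]].
rewrite -sym_eval_line sym_eval_line_swap => [|l li]; last first.
  by apply/eqP; rewrite -[_ == _]negbK ui (negbTE li).
by rewrite sym_eval_line big1 // => j _; rewrite (S_eq0 u uS) mul0r.
Qed.

Lemma sym_coef_enum_val x (i : 'I_N) : sym_coef x [ffun l => tnth (enum_val i) l] = x 0 i.
Proof.
rewrite /sym_coef; have -> : multiset_of [ffun l => tnth (enum_val i) l] = multiset_at i.
  rewrite /multiset_of (eq_map (g := val \o tnth (enum_val i))) => [|l]; last by rewrite ffunE.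
  rewrite map_comp map_tnth_enum sorted_sort //; first exact: leq_trans.
  by have := enum_valP i; rewrite inE.
rewrite (bigD1 i) //= eqxx mulr1 big1 ?addr0 // => i' i'i.
suff /negbTE -> : multiset_at i != multiset_at i' by rewrite mulr0.
by apply: contra i'i => /eqP/(inj_map val_inj)/val_inj/enum_val_inj ->.
Qed.

Lemma sym_eq0_of_line_eq0 x : (r <= n)%N -> (forall v, line_eq0 x v) -> x = 0.
Proof.
move=> r_le_n x_eq0.
have sym_coef_eq0 : forall J, sym_coef x J = 0.
  apply: (grid_coefs_eq0 (mu := fun l a => label l (widen_ord r_le_n a))).
    by move=> l a b /label_inj[_ /(congr1 val) ab]; apply: val_inj.
  move=> g; pose v : V := [ffun l => widen_ord r_le_n (g (lift ord_max l))].
  transitivity (sym_eval x (line_point v (label d (widen_ord r_le_n (g ord_max))))).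
    apply: eq_bigr => J _; congr (_ * _); apply: eq_bigr => l _.
    by rewrite /line_point; case: (unliftP ord_max l) => [l'|] ->; rewrite ?ffunE ?lift_max.
  by rewrite sym_eval_line big1 // => j _; rewrite x_eq0 mul0r.
by apply/rowP => i; rewrite -sym_coef_enum_val sym_coef_eq0 mxE.
Qed.

Lemma exists_line_eq0_on (A : {set V}) : (#|A| * r < N)%N ->
  exists2 x, x != 0 & {in A, forall a, line_eq0 x a}.
Proof.
move=> card_lt.
pose M : 'M[rat]_(N, #|{: 'I_#|A| * 'I_r}|) :=
  \matrix_(i, k) basis_line_coef i (enum_val (enum_val k).1) (enum_val k).2.
have [|x x0 xM] := nonzero_left_kernel M; first by rewrite card_prod !card_ord.
exists x => // a Aa j.
have := congr1 (fun y : 'rV_ _ => y 0 (enum_rank (enum_rank_in Aa a, j))) xM.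
by rewrite !mxE => <-; apply: eq_bigr => i _; rewrite !mxE enum_rankK /= enum_rankK_in.
Qed.

Lemma percolating_card_ge (A : {set V}) : (r <= n)%N -> percolating r A ->
  ('C(d.+1 + m, d.+1) <= #|A| * r)%N.
Proof.
move=> r_le_n percA; rewrite -card_sorted_tuples leqNgt.
apply/negP => /exists_line_eq0_on[x x0 Ax].
have x_eq0 := percolating_ind percA Ax (@line_eq0_of_neighbours x).
by move: x0; rewrite (sym_eq0_of_line_eq0 r_le_n x_eq0) eqxx.
Qed.

End LowerBound.

Lemma card_ord_lt n k : k <= n -> #|[set a : 'I_n | a < k]| = k.
Proof.
move=> kn; have -> : [set a : 'I_n | a < k] = widen_ord kn @: 'I_k.
  apply/setP => a; rewrite inE; apply/idP/imsetP => [ak|[b _ ->]]; last exact: (ltn_ord b).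
  by exists (Ordinal ak) => //; apply: val_inj.
by rewrite card_imset ?card_ord // => a b /(congr1 val) ab; apply: val_inj.
Qed.

Lemma ffact_le_expn K d : K ^_ d <= K ^ d.
Proof.
rewrite ffact_prod -[d in K ^ d]card_ord -prod_nat_const.
by apply: leq_prod => i _; apply: leq_subr.
Qed.

Section UpperBound.
Variables (n d r : nat).
Hypotheses (r_gt0 : 0 < r) (r_lt_n : r < n) (d_gt0 : 0 < d).
Local Notation V := (Knd_vertex n d).
Implicit Types (u v : V) (i : 'I_d) (a : 'I_n).

Definition weight v := \sum_(i < d) (v i : nat).
Definition seed := [set v : V | (weight v < r) && (weight v %% d == r.-1 %% d)].
Definition upd v i a : V := [ffun l => if l == i then a else v l].
Definition good v i := [set a : 'I_n | (a < v i) || (v i < a) && (upd v i a \in seed)].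

Lemma weight_upd v i a : weight (upd v i a) + v i = weight v + a.
Proof.
rewrite /weight (bigD1 i) //= [in RHS](bigD1 i) //= ffunE eqxx.
rewrite (eq_bigr (fun l => v l : nat)) => [|l /negbTE li]; last by rewrite ffunE li.
by rewrite addnAC [RHS]addnAC [a + _]addnC.
Qed.

Lemma coord_le_weight v i : v i <= weight v.
Proof. by rewrite /weight (bigD1 i) // leq_addr. Qed.

Lemma upd_adj v i a : a != v i -> Knd_adj (upd v i a) v.
Proof.
move=> av; apply/cards1P; exists i; apply/setP => l; rewrite !inE ffunE.
by have [->|] := eqVneq l i; rewrite ?av ?eqxx.
Qed.

Lemma card_upd_image v (P : 'I_d -> {set 'I_n}) : (forall i, v i \notin P i) ->
  #|[set upd v p.1 p.2 | p in [set p : 'I_d * 'I_n | p.2 \in P p.1]]| = \sum_i #|P i|.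
Proof.
move=> vP; rewrite card_in_imset => [|[i a] [i' a']]; last first.
  rewrite !inE /= => Pa Pa' /ffunP E; have := E i; have := E i'; rewrite !ffunE !eqxx.
  have [-> _ -> //|i'i Ea'] := eqVneq i' i.
  by move: Pa'; rewrite -Ea' (negbTE (vP i')).
rewrite -sum1_card (eq_bigl (fun p => p.2 \in P p.1)) => [|p]; last by rewrite inE.
rewrite -(pair_big_dep xpredT (fun i a => a \in P i) (fun _ _ => 1)).
by apply: eq_bigr => i _; rewrite sum1_card.
Qed.

Lemma card_raise_into_seed v i : v \notin seed -> weight v < r ->
  (r.-1 - weight v) %/ d < #|[set a : 'I_n | (v i < a) && (upd v i a \in seed)]|.
Proof.
move=> v_seed wr; pose g := r.-1 - weight v.
have gE : weight v + g = r.-1 by rewrite subnKC // -ltnS prednK.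
have g_mod : g %% d != 0.
  apply: contra v_seed => /eqP g_mod.
  by rewrite inE wr -gE (divn_eq g d) g_mod addn0 addnC modnMDl eqxx.
(* Raising coordinate [i] by [g - d * s], for [s <= g %/ d], lands in the seed,
   and since [d] does not divide [g] this is a strict increase. *)
have ds_lt (s : 'I_(g %/ d).+1) : d * s < g.
  have : s * d <= g %/ d * d by rewrite leq_mul2r -ltnS ltn_ord orbT.
  by have := divn_eq g d; move: g_mod; rewrite -lt0n; lia.
have raise_lt (s : 'I_(g %/ d).+1) : v i + g - d * s < n.
  by have := coord_le_weight v i; lia.
pose raise s := Ordinal (raise_lt s).
have raise_inj : injective raise.
  move=> s s' /(congr1 val) /= E; apply/ord_inj/eqP; rewrite -(eqn_pmul2l d_gt0).
  by have := ds_lt s; have := ds_lt s'; lia.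
rewrite -/g -[(g %/ d).+1]card_ord -(card_imset _ raise_inj).
apply/subset_leq_card/subsetP => _ /imsetP[s _ ->]; rewrite !inE /=.
have := ds_lt s; have := weight_upd v i (raise s) => /= wu dsg.
apply/and3P; split; [lia | lia |].
by rewrite (_ : r.-1 = weight (upd v i (raise s)) + s * d) 1?[_ + s * d]addnC ?modnMDl //; lia.
Qed.

Lemma card_good v : v \notin seed -> r <= \sum_i #|good v i|.
Proof.
move=> v_seed; pose L i := [set a : 'I_n | a < v i].
have card_L i : #|L i| = v i := card_ord_lt (ltnW (ltn_ord (v i))).
have [wr|rw] := ltnP (weight v) r; last first.
  apply: leq_trans rw _; apply: leq_sum => i _; rewrite -card_L.
  by apply/subset_leq_card/subsetP => a; rewrite !inE => ->.
pose U i := [set a : 'I_n | (v i < a) && (upd v i a \in seed)].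
have good_LU i : good v i = L i :|: U i by apply/setP => a; rewrite !inE.
have LU_disj i : [disjoint L i & U i].
  by apply/pred0P => a /=; rewrite !inE; apply/negP => /andP[av /andP[/(ltn_trans av)]]; rewrite ltnn.
have card_good i : #|good v i| = v i + #|U i|.
  by rewrite good_LU -card_L; apply/eqP; rewrite (leq_card_setU (L i) (U i)).2.
pose g := r.-1 - weight v.
apply: leq_trans (_ : weight v + d * (g %/ d).+1 <= _).
  by have := ltn_pmod g d_gt0; have := divn_eq g d; rewrite /g; nia.
rewrite (eq_bigr _ (fun i _ => card_good i)) big_split leq_add2l /=.
rewrite -[d in d * _]card_ord -sum_nat_const; apply: leq_sum => i _.
exact: card_raise_into_seed.
Qed.

Lemma seed_percolating : percolating r seed.
Proof.
have seed_sub k : seed \subset bp_iter r seed k := bp_iter_subset r seed (leq0n k).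
suff weight_lt k v : weight v < k -> v \in bp_iter r seed k.
  by move=> v; exists (weight v).+1; apply: weight_lt.
elim: k v => [//|k IH] v wk.
have [v_seed|v_seed] := boolP (v \in seed); first exact: subsetP (seed_sub _) _ v_seed.
rewrite /= in_setU inE; apply/orP; right.
apply: leq_trans (card_good v_seed) _.
rewrite -(@card_upd_image v (good v)) => [|i]; last by rewrite inE ltnn.
apply/subset_leq_card/subsetP => _ /imsetP[[i a] + ->]; rewrite inE /= => a_good.
rewrite inE upd_adj ?andbT; last by apply: contraTneq a_good => ->; rewrite inE ltnn.
move: a_good; rewrite inE => /orP[av|/andP[_ a_seed]]; last exact: subsetP (seed_sub _) _ a_seed.
by apply: IH; have := weight_upd v i a; lia.
Qed.

End UpperBound.

Section SeedCard.
Variables (n d r : nat).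
Hypotheses (r_gt0 : 0 < r) (d_gt0 : 0 < d).
Local Notation V := (Knd_vertex n d).
Local Notation seed := (seed n d r).
Local Notation M := (r + 2 * d - 3).
Implicit Types (v : V) (t : 'I_d).

Definition prefix_weight v (j : nat) := \sum_(l < d | l <= j) (v l : nat).
Definition code v (t : 'I_d) (j : nat) := j + t + prefix_weight v j.
Definition code_tuple v (t : 'I_d) : d.-tuple 'I_M.+1 := [tuple inord (code v t j) | j < d].

Lemma prefix_weight_mono v : {homo prefix_weight v : x y / x <= y}.
Proof.
move=> x y xy; rewrite /prefix_weight big_mkcond [leqRHS]big_mkcond leq_sum // => l _.
by case: ifP => // lx; rewrite (leq_trans lx xy).
Qed.

Lemma prefix_weightS v (j : 'I_d) : 0 < j -> prefix_weight v j = prefix_weight v j.-1 + v j.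
Proof.
move=> j_gt0; rewrite /prefix_weight (bigD1 j) //= addnC; congr (_ + _).
by apply: eq_bigl => l; rewrite -val_eqE /=; apply/idP/idP; lia.
Qed.

Lemma prefix_weight0 v : prefix_weight v 0 = v (Ordinal d_gt0).
Proof.
rewrite /prefix_weight (bigD1 (Ordinal d_gt0)) //= big_pred0 ?addn0 // => l.
by rewrite -val_eqE /=; apply/negbTE/negP => /andP[]; lia.
Qed.

Lemma prefix_weight_last v : prefix_weight v d.-1 = weight v.
Proof. by apply: eq_bigl => l; rewrite -ltnS prednK ?ltn_ord. Qed.

Lemma code_lt v t (j : 'I_d) : weight v < r -> code v t j < M.+1.
Proof.
rewrite /code => wr; have := prefix_weight_mono v (_ : j <= d.-1).
rewrite prefix_weight_last -ltnS prednK // => /(_ (ltn_ord j)).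
by have := ltn_ord t; have := ltn_ord j; lia.
Qed.

Lemma code_tupleE v t (j : 'I_d) : weight v < r -> val (tnth (code_tuple v t) j) = code v t j.
Proof. by move=> wr; rewrite tnth_mktuple /= inordK ?code_lt. Qed.

Lemma code_tuple_sorted v t : weight v < r -> sorted ltn (map val (code_tuple v t)).
Proof.
move=> wr; have -> : map val (code_tuple v t) = map (code v t) (iota 0 d).
  rewrite -val_enum_ord -map_comp /= -map_comp.
  by apply: eq_map => j /=; rewrite inordK ?code_lt.
apply: (homo_sorted (e := ltn)) (iota_ltn_sorted _ _) => x y xy.
by rewrite /code; have := prefix_weight_mono v (ltnW xy); lia.
Qed.

Lemma code_tuple_inj v v' t t' : v \in seed -> v' \in seed ->
  code_tuple v t = code_tuple v' t' -> v = v' /\ t = t'.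
Proof.
move=> v_seed v'_seed E; move: (v_seed) (v'_seed); rewrite !inE => /andP[wr /eqP wv] /andP[w'r /eqP wv'].
have codeE (j : 'I_d) : code v t j = code v' t' j by rewrite -!code_tupleE // E.
have vj (j : 'I_d) : 0 < j -> v j = v' j.
  move=> j_gt0; have jp : j.-1 < d by rewrite (leq_ltn_trans (leq_pred j)).
  have := codeE j; have := codeE (Ordinal jp); rewrite /code /= !(prefix_weightS _ j_gt0).
  by move=> ? ?; apply: ord_inj; lia.
have := codeE (Ordinal d_gt0); rewrite /code /= !prefix_weight0 => E0.
have := codeE (Ordinal (etrans (ltn_predL d) d_gt0)); rewrite /code /= !prefix_weight_last => Elast.
(* Seed weights are all [r.-1] modulo [d], so the last entry determines [t]. *)
have tt' : t = t'.
  have : (weight v + t) %% d = (weight v' + t') %% d by congr (_ %% d); lia.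
  rewrite -modnDml wv -[in RHS]modnDml wv' => /eqP; rewrite eqn_modDl.
  by rewrite !modn_small // => /eqP /val_inj.
subst t'; split => //; apply/ffunP => j.
have [j0|] := posnP j; last exact: vj.
have -> : j = Ordinal d_gt0 by apply: val_inj.
by apply: ord_inj; move: E0; rewrite !add0n => /addnI.
Qed.

Lemma card_seed_mul_le : #|seed| * d <= 'C(M.+1, d).
Proof.
rewrite -[d in _ * d]card_ord -cardsT -cardsX -card_ltn_sorted_tuples.
rewrite -(@card_in_imset _ _ (fun p => code_tuple p.1 p.2)) => [|[v t] [v' t']]; last first.
  by rewrite !in_setX !in_setT /= !andbT => v_seed v'_seed /(code_tuple_inj v_seed v'_seed) [-> ->].
apply/subset_leq_card/subsetP => _ /imsetP[[v t] + ->]; rewrite !inE /= andbT => /andP[wr _].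
exact: code_tuple_sorted.
Qed.

Lemma card_seed_le : #|seed| * d * d`! <= (r + 2 * d - 2) ^ d.
Proof.
rewrite (_ : r + 2 * d - 2 = M.+1); last by lia.
apply: leq_trans (ffact_le_expn _ _); rewrite -bin_ffact leq_mul2r.
by rewrite card_seed_mul_le orbT.
Qed.

End SeedCard.

Section Arithmetic.
Local Open Scope ring_scope.

Lemma two_le_mul_one_sub_sqr (R : realFieldType) (D : R) : 2 <= D ->
  2 <= D * (1 - ((D - 2) / (D - 1)) ^+ 2).
Proof.
move=> D2; have D1 : D - 1 != 0 by rewrite subr_eq0; apply/eqP => D1; lra.
have -> : D * (1 - ((D - 2) / (D - 1)) ^+ 2) = 2 + (D - 2) / (D - 1) ^+ 2 by field.
by rewrite lerDl divr_ge0 ?sqr_ge0 // subr_ge0.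
Qed.

Lemma upper_bound_of_card_le (R : realFieldType) (a x D f : R) (d : nat) :
  2 <= D -> 1 <= x -> 0 <= a -> 0 < f -> a * D * f <= (x + 2 * D - 2) ^+ d ->
  a <= ((x + 2 * D - 1) ^+ d - ((D - 2) / (D - 1)) ^+ 2 * (x - 2) ^+ d) / (2 * f).
Proof.
move=> D2 x1 a0 f_gt0; have h1 := two_le_mul_one_sub_sqr D2.
set dl := (D - 2) / (D - 1) in h1 *; set k := x + 2 * D - 2.
have kE : k = x + 2 * D - 2 by []; clearbody k => a_le.
rewrite (_ : x + 2 * D - 1 = k + 1); last by rewrite kE; ring.
rewrite ler_pdivlMr ?mulr_gt0 //.
have xk : (x - 2) ^+ d <= k ^+ d.
  apply: le_trans (ler_norm _) _; rewrite normrX.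
  by apply: lerXn2r; rewrite ?nnegrE ?normr_ge0 ?ler_norml //; [lra | apply/andP; split; lra].
have kk : k ^+ d <= (k + 1) ^+ d by apply: lerXn2r; rewrite ?nnegrE; lra.
have e1 : 0 <= (D * (1 - dl ^+ 2) - 2) * (a * f) by rewrite mulr_ge0 ?mulr_ge0 ?subr_ge0 // ltW.
have e2 : 0 <= (1 - dl ^+ 2) * (k ^+ d - a * D * f).
  by rewrite mulr_ge0 ?subr_ge0 //; nra.
have e3 : 0 <= dl ^+ 2 * (k ^+ d - (x - 2) ^+ d) by rewrite mulr_ge0 ?sqr_ge0 ?subr_ge0.
(* The goal is the sum of [e1], [e2], [e3] and [kk]. *)
nra.
Qed.

End Arithmetic.

Local Open Scope ring_scope.

Theorem theorem4p4 (n r d : nat) :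
  (0 < r)%N -> (r + 1 <= n)%N -> (2 <= d)%N ->
  let delta : rat := (d%:R - 2) / (d%:R - 1) in
  let lower : rat := (1 / r%:R) * ('C(d + r, d + 1))%:R in
  let upper : rat :=
    ((r%:R + 2 * d%:R - 1) ^+ d - delta ^+ 2 * (r%:R - 2) ^+ d) / (2 * (d`!)%:R) in
  (forall A : {set Knd_vertex n d}, percolating r A -> lower <= (#|A|)%:R) /\
  (exists A : {set Knd_vertex n d}, percolating r A /\ (#|A|)%:R <= upper).
Proof.
move=> r_gt0 r_lt_n d_ge2 delta lower upper; have d_gt0 := ltnW d_ge2; split=> [A percA|].
  clear upper delta; case: r r_gt0 r_lt_n percA @lower => // m _ r_lt_n percA lower.
  rewrite /lower div1r mulrC ler_pdivrMr ?ltr0n // -natrM ler_nat addn1 -addSnnS.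
  by apply: percolating_card_ge => //; lia.
exists (seed n d r); split; first by apply: seed_percolating; rewrite // -addn1.
apply: upper_bound_of_card_le; rewrite ?ler_nat ?ler1n ?ltr0n ?fact_gt0 //.
have -> : r%:R + 2 * d%:R - 2 = (r + 2 * d - 2)%N%:R :> rat.
  by rewrite natrB; [rewrite natrD natrM | lia].
by rewrite -!natrM -natrX ler_nat card_seed_le.
Qed.
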